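(* Let $X=(\mathbb R^2,\|\cdot\|_2,\mathcal L^2)$ and $S=\{(x_1,x_2)\in\mathbb R^2: x_1\in[0,1],\ x_2=0\}$. Then for each $\theta\in(1,2)$ there exists a sequence of measures $\{\mathfrak m_k\}\in\mathfrak M_\theta(S)\setminus\mathfrak M^{str}_\theta(S)$.
   Context: Balls are closed: $B_r(x)=\{y:\|y-x\|_2\le r\}$; $\mu=\mathcal L^2$ is Lebesgue measure. A measure means a nonzero Borel regular locally finite measure. For $\theta\ge0$ and a closed nonempty $S$, $\{\mathfrak m_k\}_{k=0}^\infty\in\mathfrak M_\theta(S)$ if there is $\epsilon\in(0,1)$ such that: (M1) $\operatorname{supp}\mathfrak m_k=S$ for all $k\in\mathbb N_0$; (M2) there is $C_1>0$ with $\mathfrak m_k(B_r(x))\le C_1\mu(B_r(x))/r^\theta$ for all $k$, $x\in X$, $r\in(0,\epsilon^k]$; (M3) there is $C_2>0$ with $\mathfrak m_k(B_r(x))\ge C_2\mu(B_r(x))/r^\theta$ for all $k$, $x\in S$, $r\in[\epsilon^k,1]$; (M4) $\mathfrak m_k=w_k\mathfrak m_0$ with $w_k\in L^\infty(\mathfrak m_0)$ and $C_3>0$ such that $\epsilon^{\theta j}/C_3\le w_k(x)/w_{k+j}(x)\le C_3$ for $\mathfrak m_0$-a.e. $x\in S$ and all $k,j\in\mathbb N_0$. $\{\mathfrak m_k\}\in\mathfrak M^{str}_\theta(S)$ if moreover (M5) for every Borel $E\subset S$, $\limsup_{k\to\infty}\mathfrak m_k(B_{\epsilon^k}(x)\cap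 E)/\mathfrak m_k(B_{\epsilon^k}(x))>0$ for $\mathfrak m_0$-a.e. $x\in E$. *)

From HB Require Import structures.
From mathcomp Require Import all_boot all_order all_algebra.
From mathcomp Require Import all_classical all_reals all_analysis.
Set Implicit Arguments. Unset Strict Implicit. Unset Printing Implicit Defensive.
Import Order.TTheory GRing.Theory Num.Theory.
Import numFieldNormedType.Exports.
Local Open Scope classical_set_scope.
Local Open Scope ring_scope.

(* The plane R^2 = R * R, with the product (= Borel) sigma-algebra. *)

Definition eball (R : realType) (x : R * R) (r : R) : set (R * R) :=
  [set y | (y.1 - x.1) ^+ 2 + (y.2 - x.2) ^+ 2 <= r ^+ 2 /\ 0 <= r].

Definition leb2 (R : realType) : set (R * R) -> \bar R :=
  ((@lebesgue_measure R) \x (@lebesgue_measure R))%E.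

Definition segS (R : realType) : set (R * R) :=
  [set x | 0 <= x.1 <= 1 /\ x.2 = 0].

(* "A measure": nonzero, locally finite (Borel regularity is automatic for a
   measure defined on the Borel sigma-algebra). *)
Definition is_measure2 (R : realType) (m : {measure set (R * R) -> \bar R}) :=
  m setT != 0%E /\
  (forall x : R * R, exists2 r : R, 0 < r & (m (eball x r) < +oo)%E).

Definition msupp (R : realType) (m : {measure set (R * R) -> \bar R}) : set (R * R) :=
  [set x | forall r : R, 0 < r -> (0 < m (eball x r))%E].

Definition condM (R : realType) (theta eps : R) (S : set (R * R))
  (m : nat -> {measure set (R * R) -> \bar R}) : Prop :=
  (forall k, msupp (m k) = S) /\
  (exists2 C1 : R, 0 < C1 &
     forall k (x : R * R) (r : R), 0 < r -> r <= eps ^+ k ->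
       (m k (eball x r) <= (C1 / r `^ theta)%:E * @leb2 R (eball x r))%E) /\
  (exists2 C2 : R, 0 < C2 &
     forall k (x : R * R) (r : R), S x -> eps ^+ k <= r -> r <= 1 ->
       ((C2 / r `^ theta)%:E * @leb2 R (eball x r) <= m k (eball x r))%E) /\
  (exists w : nat -> R * R -> R,
     (forall k, measurable_fun setT (w k)) /\
     (forall k, exists M : R, {ae m 0%N, forall x, `|w k x| <= M}) /\
     (forall k (A : set (R * R)), measurable A ->
        m k A = (\int[m 0%N]_(x in A) (w k x)%:E)%E) /\
     (exists2 C3 : R, 0 < C3 &
        forall k j : nat, {ae m 0%N, forall x, S x ->
          eps `^ (theta * j%:R) / C3 <= w k x / w (k + j)%N x <= C3})).

Definition condM5 (R : realType) (eps : R) (S : set (R * R))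
  (m : nat -> {measure set (R * R) -> \bar R}) : Prop :=
  forall E : set (R * R), measurable E -> E `<=` S ->
    {ae m 0%N, forall x, E x ->
      (0 < limn_esup (fun k => (fine (m k (eball x (eps ^+ k) `&` E))
                               / fine (m k (eball x (eps ^+ k))))%:E))%E}.

Definition inM (R : realType) (theta : R) (S : set (R * R))
  (m : nat -> {measure set (R * R) -> \bar R}) : Prop :=
  (forall k, is_measure2 (m k)) /\
  exists eps : R, 0 < eps < 1 /\ condM theta eps S m.

Definition inMstr (R : realType) (theta : R) (S : set (R * R))
  (m : nat -> {measure set (R * R) -> \bar R}) : Prop :=
  (forall k, is_measure2 (m k)) /\
  exists eps : R, 0 < eps < 1 /\ condM theta eps S m /\ condM5 eps S m.

From HB Require Import structures.
From mathcomp Require Import all_boot all_order all_algebra.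
From mathcomp Require Import all_classical all_reals all_analysis.
From mathcomp Require Import lra ring.
Import Order.TTheory GRing.Theory Num.Theory.
Import numFieldNormedType.Exports.
Local Open Scope classical_set_scope.
Local Open Scope ring_scope.

Section lebesgue_line.
Context {R : realType}.

Lemma lebesgue_itv_cc {a c : R} : a <= c ->
  lebesgue_measure (`[a, c] : set R) = (c - a)%:E.
Proof.
move=> ac; rewrite lebesgue_measure_itv /= lte_fin.
by case: ltgtP ac => // ->; rewrite subrr.
Qed.

Lemma lebesgue_le_itv_cc {X : set R} {a c : R} : measurable X ->
  X `<=` `[a, c] -> a <= c -> (lebesgue_measure X <= (c - a)%:E)%E.
Proof.
move=> mX Xac ac; have := lebesgue_itv_cc ac => <-.
by apply: le_measure => //; rewrite inE //; exact: measurable_itv.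
Qed.

Lemma lebesgue_le1 {X : set R} : measurable X -> X `<=` `[0, 1] ->
  (lebesgue_measure X <= 1)%E.
Proof. by move=> mX X01; rewrite -[1]subr0 lebesgue_le_itv_cc. Qed.

Definition itv_cover (l : seq R) (e : R) : set R :=
  \bigcup_(c in [set` l]) `[c - e, c + e]%classic.

Lemma measurable_itv_cover l e : measurable (itv_cover l e).
Proof.
by rewrite /itv_cover bigcup_seq; apply: bigsetU_measurable => *; exact: measurable_itv.
Qed.

Lemma lebesgue_itv_cover_le (l : seq R) (e : R) : 0 <= e ->
  (lebesgue_measure (itv_cover l e) <= ((size l)%:R * (2 * e))%:E)%E.
Proof.
move=> e0; elim: l => [|c l IH].
  by rewrite /itv_cover bigcup_seq big_nil measure0 mul0r.
have -> : itv_cover (c :: l) e = `[c - e, c + e] `|` itv_cover l e.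
  by rewrite /itv_cover !bigcup_seq big_cons.
apply: (le_trans (measureU2 lebesgue_measure (measurable_itv _) (measurable_itv_cover l e))).
rewrite /= -addn1 natrD mulrDl mul1r addrC EFinD leeD // lebesgue_itv_cc; last lra.
by rewrite lee_fin; lra.
Qed.

Definition near_fiber (f : R -> R) (c r : R) : set R :=
  `[0, 1] `&` f @^-1` `[c - r, c + r].

Lemma measurable_near_fiber (f : R -> R) c r : measurable_fun setT f ->
  measurable (near_fiber f c r).
Proof.
move=> mf; apply: measurableI; first exact: measurable_itv.
by rewrite -[X in measurable X]setTI; apply: mf => //; exact: measurable_itv.
Qed.

Lemma powR_invl (a x : R) : 0 < a -> a^-1 `^ x = (a `^ x)^-1.
Proof. by move=> a0; rewrite /powR !gt_eqF ?invr_gt0 // lnV ?posrE // mulrN expRN. Qed.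

Lemma gtr_powR (a : R) : 0 < a < 1 -> {homo powR a : x y /~ y < x}.
Proof.
move=> /andP[a0 a1] x y yx; rewrite /powR gt_eqF // ltr_expR.
by rewrite ltr_nM2r // ln_lt0 // a0 a1.
Qed.

End lebesgue_line.

Section cantor_function.
Context {R : realType} (b : R).
Hypotheses (b_gt0 : 0 < b) (b_lt_half : 2 * b < 1).

Definition cantor_digit (t : R) : R := if 2^-1 <= t then 1 else 0.

Fixpoint cantor_approx (n : nat) (t : R) : R :=
  if n is m.+1 then
    (1 - b) * cantor_digit t + b * cantor_approx m (2 * t - cantor_digit t)
  else 0.

(* [cantor_fun] sends [t = \sum_i d_i 2^-(i+1)] to [\sum_i (1 - b) b^i d_i]:
   the binary digits of [t] become the address of a point of the Cantor set
   of ratio [b]. *)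
Definition cantor_fun (t : R) : R := limn (cantor_approx ^~ t).

Lemma cantor_digit01 t : 0 <= cantor_digit t <= 1.
Proof. by rewrite /cantor_digit; case: ifP; rewrite ?lexx ?ler01. Qed.

Lemma cantor_approx01 n t : 0 <= cantor_approx n t <= 1.
Proof.
elim: n t => [|n IH] t /=; first by rewrite lexx ler01.
have /andP[d0 d1] := cantor_digit01 t.
have /andP[a0 a1] := IH (2 * t - cantor_digit t).
have := b_gt0; have := b_lt_half => *.
apply/andP; split; nra.
Qed.

Lemma cantor_approx_nondecreasing t : nondecreasing_seq (cantor_approx ^~ t).
Proof.
apply/nondecreasing_seqP => n; elim: n t => [|n IH] t /=.
  by have /andP[] := cantor_approx01 1 t.
by rewrite lerD2l ler_wpM2l ?(ltW b_gt0).
Qed.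

Lemma cvg_cantor_approx t : cantor_approx ^~ t @ \oo --> cantor_fun t.
Proof.
suff : cvgn (cantor_approx ^~ t) by [].
apply: cvgP; apply: nondecreasing_cvgn; first exact: cantor_approx_nondecreasing.
by exists 1 => _ [n _ <-]; have /andP[] := cantor_approx01 n t.
Qed.

Lemma cantor_fun01 t : 0 <= cantor_fun t <= 1.
Proof.
apply/andP; split;
  [apply: (limr_ge (cvg_cantor_approx t))|apply: (limr_le (cvg_cantor_approx t))];
  by apply: nearW => n; have /andP[] := cantor_approx01 n t.
Qed.

Lemma cantor_funE t :
  cantor_fun t = (1 - b) * cantor_digit t + b * cantor_fun (2 * t - cantor_digit t).
Proof.
have lim_shift : (fun n => cantor_approx n.+1 t) @ \oo --> cantor_fun t.
  by rewrite (cvg_shiftS (cantor_approx ^~ t)); exact: cvg_cantor_approx.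
have lim_rec : (fun n => cantor_approx n.+1 t) @ \oo -->
    (1 - b) * cantor_digit t + b * cantor_fun (2 * t - cantor_digit t).
  by apply: cvgD; [exact: cvg_cst|apply: cvgM; [exact: cvg_cst|exact: cvg_cantor_approx]].
exact: (cvg_unique _ lim_shift lim_rec).
Qed.

Lemma measurable_cantor_fun : measurable_fun setT cantor_fun.
Proof.
have md : measurable_fun setT cantor_digit.
  apply: measurable_fun_ifT; [|exact: measurable_cst..].
  by apply: measurable_realfun.measurable_fun_ler => //; exact: measurable_cst.
apply: (measurable_realfun.measurable_fun_cvg (h := cantor_approx)) => [n|t _];
  last exact: cvg_cantor_approx.
elim: n => [|n IH] /=; first exact: measurable_cst.
apply: measurable_realfun.measurable_funD.
  exact: measurable_realfun.measurable_funM.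
apply: measurable_realfun.measurable_funM; first exact: measurable_cst.
by apply: (measurableT_comp IH); apply: measurable_realfun.measurable_funB.
Qed.

(* Points [t < u] at distance [>= 2^(1-n)] are separated by a dyadic interval
   of level [n], across which [cantor_fun] jumps over a gap of the Cantor set of
   length [(1 - 2b) b^n]; induct on [n] by comparing first binary digits. *)
Lemma cantor_fun_spread n t u : 0 <= t -> u <= 1 -> 2 <= 2 ^+ n * (u - t) ->
  (1 - 2 * b) * b ^+ n <= cantor_fun u - cantor_fun t.
Proof.
elim: n t u => [|n IH] t u t0 u1 h; first by move: h; rewrite expr0; lra.
have := b_gt0; have := b_lt_half => *.
have bn1 : b ^+ n <= 1 by apply: exprn_ile1; lra.
have bn0 : 0 <= b ^+ n by apply: exprn_ge0; lra.
have hn : 0 <= 2 ^+ n :> R by apply: exprn_ge0.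
rewrite exprS in h; rewrite exprS (cantor_funE u) (cantor_funE t) /cantor_digit.
have bbn1 : b * b ^+ n <= 1 by nra.
case: (leP 2^-1 u) => hu; case: (leP 2^-1 t) => ht.
- have : (1 - 2 * b) * b ^+ n <= cantor_fun (2 * u - 1) - cantor_fun (2 * t - 1).
    by apply: IH; lra.
  nra.
- have /andP[fu0 _] := cantor_fun01 (2 * u - 1).
  have /andP[_ ft1] := cantor_fun01 (2 * t - 0).
  nra.
- nra.
- have : (1 - 2 * b) * b ^+ n <= cantor_fun (2 * u - 0) - cantor_fun (2 * t - 0).
    by apply: IH; lra.
  nra.
Qed.

Lemma lebesgue_cantor_fiber_small n c r : 2 * r < (1 - 2 * b) * b ^+ n ->
  (lebesgue_measure (near_fiber cantor_fun c r) <= (4 / 2 ^+ n)%:E)%E.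
Proof.
move=> hr; have hn : 0 < 2 ^+ n :> R by apply: exprn_gt0.
have [[t0 Ft0]|] := pselect (exists t0, near_fiber cantor_fun c r t0); last first.
  move=> nF; have -> : near_fiber cantor_fun c r = set0.
    by apply/seteqP; split => t // Ft; apply: nF; exists t.
  by rewrite measure0 lee_fin divr_ge0 // ltW.
have close u v : near_fiber cantor_fun c r u -> near_fiber cantor_fun c r v ->
    u <= v -> v - u < 2 / 2 ^+ n.
  rewrite /near_fiber /= !in_itv /= => -[/andP[u0 _] fu] [/andP[_ v1] fv] uv.
  rewrite ltNge ler_pdivrMr // mulrC; apply/negP => /(cantor_fun_spread _ _ _ u0 v1).
  by move: fu fv => /andP[? ?] /andP[? ?]; lra.
have h2 : 0 < 2 / 2 ^+ n :> R by apply: divr_gt0.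
have sub : near_fiber cantor_fun c r `<=` `[t0 - 2 / 2 ^+ n, t0 + 2 / 2 ^+ n].
  move=> t Ft; rewrite /= in_itv /=.
  case: (leP t t0) => tt0;
    [have := close _ _ Ft Ft0 tt0|have := close _ _ Ft0 Ft (ltW tt0)]; lra.
apply: (le_trans (lebesgue_le_itv_cc (measurable_near_fiber _ c r measurable_cantor_fun) sub _)).
  lra.
by rewrite lee_fin; lra.
Qed.

Fixpoint cantor_centers (n : nat) : seq R :=
  if n is m.+1 then
    [seq b * c | c <- cantor_centers m] ++ [seq 1 - b + b * c | c <- cantor_centers m]
  else [:: 0].

Lemma size_cantor_centers n : size (cantor_centers n) = (2 ^ n)%N.
Proof. by elim: n => //= n IH; rewrite size_cat !size_map IH expnS mul2n addnn. Qed.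

Definition cantor_set : set R :=
  \bigcap_n itv_cover (cantor_centers n) (b ^+ n).

Lemma measurable_cantor_set : measurable cantor_set.
Proof. by apply: bigcap_measurableType => n _; exact: measurable_itv_cover. Qed.

Lemma cantor_fun_near_center n t :
  exists2 c, c \in cantor_centers n & `|cantor_fun t - c| <= b ^+ n.
Proof.
elim: n t => [|n IH] t.
  by exists 0; rewrite ?inE // subr0 expr0 ger0_norm; case/andP: (cantor_fun01 t).
have [c cn fc] := IH (2 * t - cantor_digit t).
exists ((1 - b) * cantor_digit t + b * c).
  rewrite /= mem_cat /cantor_digit; case: ifP => _; apply/orP.
    by right; apply/mapP; exists c; rewrite ?mulr1.
  by left; apply/mapP; exists c; rewrite ?mulr0 ?add0r.
have -> : cantor_fun t - ((1 - b) * cantor_digit t + b * c) =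
    b * (cantor_fun (2 * t - cantor_digit t) - c) by rewrite {1}cantor_funE; ring.
by rewrite normrM ger0_norm ?(ltW b_gt0) // exprS ler_pM2l.
Qed.

Lemma cantor_fun_in_cantor_set t : cantor_set (cantor_fun t).
Proof.
move=> n _; have [c cn fc] := cantor_fun_near_center n t.
by exists c => //; rewrite /= in_itv /= -ler_distl.
Qed.

Lemma lebesgue_cantor_set : lebesgue_measure cantor_set = 0%E.
Proof.
have := b_gt0; have := b_lt_half => *.
have le_stage n : (lebesgue_measure cantor_set <= (2 * (2 * b) ^+ n)%:E)%E.
  apply: (@le_trans _ _ (lebesgue_measure (itv_cover (cantor_centers n) (b ^+ n)))).
    apply: le_measure; rewrite ?inE; [exact: measurable_cantor_set|exact: measurable_itv_cover|].
    by move=> x; apply.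
  have bn0 : 0 <= b ^+ n by rewrite exprn_ge0 // ltW.
  apply: (le_trans (lebesgue_itv_cover_le _ _ bn0)).
  by rewrite size_cantor_centers natrX exprMn lee_fin mulrCA.
have lim0 : (fun n => 2 * (2 * b) ^+ n) @ \oo --> (0 : R).
  rewrite -(mulr0 2); apply: cvgM; first exact: cvg_cst.
  by apply: cvg_expr; rewrite ger0_norm; lra.
have Kfin : lebesgue_measure cantor_set \is a fin_num.
  by rewrite ge0_fin_numE ?measure_ge0 // (le_lt_trans (le_stage 0%N)) ?ltry.
apply/eqP; rewrite eq_le measure_ge0 andbT -(fineK Kfin) lee_fin.
apply: (ler_cvg_to (cvg_cst _) lim0); apply: nearW => n.
by rewrite -lee_fin fineK.
Qed.

Variable s : R.
Hypotheses (s_gt0 : 0 < s) (b_pow_s : b `^ s = 2^-1).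

(* The Hoelder bound of exponent [s] for the pushforward of Lebesgue measure by
   [cantor_fun]: pick the level [n] with [(1 - 2b) b^(n+1) <= 2r < (1 - 2b) b^n]
   and use [b^s = 1/2]. *)
Lemma lebesgue_cantor_fiber_le c r : 0 < r ->
  (lebesgue_measure (near_fiber cantor_fun c r) <=
   (8 * (2 / (1 - 2 * b)) `^ s * r `^ s)%:E)%E.
Proof.
move=> r0; have := b_gt0; have := b_lt_half => *.
have gap0 : 0 < 1 - 2 * b by lra.
rewrite -mulrA -powRM ?(ltW r0) ?divr_ge0 ?(ltW gap0) // mulrAC.
set C := 2 * r / (1 - 2 * b).
have [N bN] : exists N, (1 - 2 * b) * b ^+ N <= 2 * r.
  have b1 : `|b| < 1 by rewrite ger0_norm; lra.
  have /cvgrPdist_lt/(_ C) := cvg_expr b1.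
  case=> [|N _ /(_ N (leqnn N))]; first by apply: divr_gt0; lra.
  rewrite sub0r normrN ger0_norm ?exprn_ge0 ?(ltW b_gt0) // ltr_pdivlMr //.
  by exists N; rewrite mulrC ltW.
elim: N bN => [|n IH] bn.
  apply: (le_trans (lebesgue_le1 (measurable_near_fiber _ c r measurable_cantor_fun) _)).
    by move=> t [].
  have C1 : 1 <= C by rewrite ler_pdivlMr //; move: bn; rewrite expr0; lra.
  by have := ler_powR C1 (ltW s_gt0); rewrite powRr0 lee_fin; lra.
have [|small] := leP ((1 - 2 * b) * b ^+ n) (2 * r); first exact: IH.
apply: (le_trans (lebesgue_cantor_fiber_small _ _ _ small)); rewrite lee_fin.
have bC : b ^+ n.+1 <= C by rewrite ler_pdivlMr // mulrC.
have -> : 4 / 2 ^+ n = 8 * (b ^+ n.+1) `^ s :> R.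
  rewrite -powR_mulrn ?(ltW b_gt0) // powRAC b_pow_s powR_mulrn ?invr_ge0 //.
  by rewrite exprVn exprS; field; rewrite expf_neq0.
rewrite ler_pM2l //; apply: ge0_ler_powR => //; first exact: ltW.
- by rewrite nnegrE exprn_ge0 // ltW.
- by rewrite nnegrE divr_ge0 //; lra.
Qed.

End cantor_function.

Section plane.
Context {R : realType}.
Implicit Types (x : R * R) (r : R).

Lemma measurable_eball x r : measurable (eball x r).
Proof.
have [r0|r0] := leP 0 r; last first.
  by have -> : eball x r = set0 by apply/seteqP; split => y // [_]; lra.
have -> : eball x r =
    (fun y : R * R => (y.1 - x.1) ^+ 2 + (y.2 - x.2) ^+ 2) @^-1` `]-oo, r ^+ 2].
  by apply/seteqP; split => y /=; rewrite in_itv /=; [case|split].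
have mq : measurable_fun setT (fun y : R * R => (y.1 - x.1) ^+ 2 + (y.2 - x.2) ^+ 2).
  apply: measurable_realfun.measurable_funD; apply: measurable_realfun.measurable_funX;
    apply: measurable_realfun.measurable_funB.
  - exact: measurable_fst.
  - exact: measurable_cst.
  - exact: measurable_snd.
  - exact: measurable_cst.
by rewrite -[X in measurable X]setTI; apply: mq => //; exact: measurable_itv.
Qed.

Lemma leb2_box (a1 c1 a2 c2 : R) : a1 <= c1 -> a2 <= c2 ->
  leb2 (`[a1, c1] `*` `[a2, c2]) = ((c1 - a1) * (c2 - a2))%:E.
Proof.
move=> h1 h2; rewrite /leb2 product_measure1E ?measurable_itv //.
transitivity (lebesgue_measure (`[a1, c1] : set R) * lebesgue_measure (`[a2, c2] : set R))%E.
  by [].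
by rewrite !lebesgue_itv_cc // -EFinM.
Qed.

Lemma leb2_eball_ge x r : 0 <= r -> ((r ^+ 2)%:E <= leb2 (eball x r))%E.
Proof.
move=> r0; set Q := `[x.1 - r / 2, x.1 + r / 2] `*` `[x.2 - r / 2, x.2 + r / 2].
have QB : Q `<=` eball x r.
  by move=> y; rewrite /Q /= !in_itv /= => -[/andP[? ?] /andP[? ?]]; split => //; nra.
apply: (@le_trans _ _ (leb2 Q)); last first.
  by apply: le_measure; rewrite ?inE //; [apply: measurableX; exact: measurable_itv|exact: measurable_eball].
by rewrite leb2_box ?lee_fin; nra.
Qed.

Lemma leb2_eball_le x r : 0 <= r -> (leb2 (eball x r) <= (4 * r ^+ 2)%:E)%E.
Proof.
move=> r0; set Q := `[x.1 - r, x.1 + r] `*` `[x.2 - r, x.2 + r].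
have BQ : eball x r `<=` Q.
  move=> y [h _]; rewrite /Q /= !in_itv /=.
  have := sqr_ge0 (y.1 - x.1); have := sqr_ge0 (y.2 - x.2) => *.
  by split; apply/andP; split; nra.
apply: (@le_trans _ _ (leb2 Q)).
  by apply: le_measure; rewrite ?inE //; [exact: measurable_eball|apply: measurableX; exact: measurable_itv].
by rewrite leb2_box ?lee_fin; nra.
Qed.

Lemma eball_axis_dist x r u : eball x r (u, 0) -> `|u - x.1| <= r.
Proof.
move=> [/= h r0]; have := sqr_ge0 (0 - x.2) => ?.
by rewrite ler_norml; apply/andP; split; nra.
Qed.

Lemma eball_axis x r u : x.2 = 0 -> `|u - x.1| <= r -> eball x r (u, 0).
Proof.
move=> x2 ur; split; last exact: le_trans ur.
by rewrite /= x2 subrr expr0n addr0; move: ur; rewrite ler_norml => /andP[? ?]; nra.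
Qed.

Lemma eball_disjoint_segS x : ~ segS x ->
  exists2 r, 0 < r & forall y, segS y -> ~ eball x r y.
Proof.
move=> nSx; have [x2|x2] := eqVneq x.2 0.
  have [x1|x1] := ltP x.1 0.
    exists (- x.1 / 2); first lra.
    move=> y [/andP[y0 y1] y2] [h _]; have := sqr_ge0 (y.2 - x.2) => ?; nra.
  have [x1'|x1'] := ltP 1 x.1.
    exists ((x.1 - 1) / 2); first lra.
    move=> y [/andP[y0 y1] y2] [h _]; have := sqr_ge0 (y.2 - x.2) => ?; nra.
  by exfalso; apply: nSx; split => //; apply/andP.
have ax : 0 < `|x.2| by rewrite normr_gt0.
exists (`|x.2| / 2); first exact: divr_gt0.
move=> y [_ y2] [h _]; have := sqr_ge0 (y.1 - x.1) => ?.
have : 0 < `|x.2| ^+ 2 by rewrite exprn_gt0.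
move: h; rewrite y2 sub0r sqrrN -(real_normK (num_real x.2)) expr_div_n [2 ^+ 2]expr2; lra.
Qed.

End plane.

Section line_measure.
Context {R : realType} (f : {mfun R >-> R}).

Definition line_map (t : R) : R * R := (f t, 0).

Let measurable_line_map : measurable_fun setT line_map.
Proof. by apply: measurable_fun_pair => //; exact: measurable_funP. Qed.

Definition line_measure : set (R * R) -> \bar R :=
  pushforward (mrestr (@lebesgue_measure R) (measurable_itv `[0, 1])) line_map.

Let line_measure0 : line_measure set0 = 0%E.
Proof. by rewrite /line_measure /pushforward preimage_set0 measure0. Qed.

Let line_measure_ge0 A : (0 <= line_measure A)%E.
Proof. by rewrite /line_measure /pushforward; exact: measure_ge0. Qed.

Let line_measure_semi_sigma_additive : semi_sigma_additive line_measure.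
Proof.
have := @measure_semi_sigma_additive _ _ _
  (pushforward (mrestr (@lebesgue_measure R) (measurable_itv `[0, 1])) line_map).
by apply; exact: measurable_line_map.
Qed.

HB.instance Definition _ := isMeasure.Build _ _ _ line_measure
  line_measure0 line_measure_ge0 line_measure_semi_sigma_additive.

Lemma line_measureE A :
  line_measure A = lebesgue_measure (line_map @^-1` A `&` `[0, 1]).
Proof. by []. Qed.

Lemma measurable_line_preimage A : measurable A ->
  measurable (line_map @^-1` A `&` `[0, 1]).
Proof.
move=> mA; apply: measurableI; last exact: measurable_itv.
by rewrite -[X in measurable X]setTI; exact: measurable_line_map.
Qed.

Lemma line_measure_le1 A : measurable A -> (line_measure A <= 1)%E.
Proof.
move=> mA; rewrite line_measureE; apply: lebesgue_le1; last by move=> t [].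
exact: measurable_line_preimage.
Qed.

Lemma line_measure_setT : line_measure setT = 1%E.
Proof. by rewrite line_measureE preimage_setT setTI lebesgue_itv_cc ?ler01 // subr0. Qed.

Lemma line_measure_eball_le x r :
  (line_measure (eball x r) <= lebesgue_measure (near_fiber f x.1 r))%E.
Proof.
rewrite line_measureE; apply: le_measure; rewrite ?inE.
- exact: measurable_line_preimage (measurable_eball x r).
- exact: measurable_near_fiber _ _ _ (measurable_funP f).
- by move=> t [/eball_axis_dist ft t01]; split => //; rewrite /= in_itv /= -ler_distl.
Qed.

Lemma line_measure_eq0 A : (forall t, 0 <= t <= 1 -> ~ A (line_map t)) ->
  line_measure A = 0%E.
Proof.
move=> nA; rewrite line_measureE (_ : _ `&` _ = set0) ?measure0 //.
by apply/seteqP; split => t // [At]; rewrite /= in_itv /= => /nA.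
Qed.

Lemma line_measureI A E : (forall t, 0 <= t <= 1 -> E (line_map t)) ->
  line_measure (A `&` E) = line_measure A.
Proof.
move=> Eimg; rewrite !line_measureE; congr lebesgue_measure.
apply/seteqP; split => t [At t01] //; first by case: At.
by split => //; split => //; apply: Eimg; move: t01; rewrite /= in_itv.
Qed.

End line_measure.

Section segment_measure.
Context {R : realType}.

HB.instance Definition _ :=
  isMeasurableFun.Build _ _ _ _ (@idfun R) (@measurable_id _ _ setT).

Local Notation segment_measure := (line_measure (@idfun R)).

Lemma segment_measure_eball_le (x : R * R) r : 0 <= r ->
  (segment_measure (eball x r) <= (2 * r)%:E)%E.
Proof.
move=> r0; apply: (le_trans (line_measure_eball_le _ _ _)).
rewrite (_ : 2 * r = x.1 + r - (x.1 - r)); last by ring.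
by apply: lebesgue_le_itv_cc; [exact: measurable_near_fiber _ _ _ (measurable_funP _)|move=> t []|lra].
Qed.

Lemma segment_measure_eball_ge (x : R * R) r : segS x -> 0 < r -> r <= 1 ->
  (r%:E <= segment_measure (eball x r))%E.
Proof.
move=> [/andP[x0 x1] x2] r0 r1.
have [a [a0 ar1 ax xa]] : exists a, [/\ 0 <= a, a + r <= 1, a <= x.1 & x.1 <= a + r].
  by have [xr|xr] := leP (x.1 + r) 1; [exists x.1|exists (1 - r)]; split; lra.
have sub : `[a, a + r] `<=` line_map idfun @^-1` eball x r `&` `[0, 1].
  move=> t; rewrite /= !in_itv /= => /andP[ta tr]; split; last by apply/andP; split; lra.
  by apply: eball_axis => //=; rewrite ler_norml; apply/andP; split; lra.
apply: (@le_trans _ _ (lebesgue_measure `[a, a + r])).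
  by rewrite lebesgue_itv_cc ?lerDl ?(ltW r0) // lee_fin; lra.
rewrite line_measureE; apply: le_measure; rewrite ?inE //.
exact: measurable_line_preimage _ _ (measurable_eball x r).
Qed.

End segment_measure.

Notation segment_measure := (line_measure idfun).

Section counterexample.
Context {R : realType} (theta : R).
Hypotheses (theta_gt1 : 1 < theta) (theta_lt2 : theta < 2).
Implicit Types (k : nat) (x : R * R) (r eps : R).

Let s : R := (3 - theta) / 2.

Let s_gt0 : 0 < s. Proof. by have := theta_lt2; rewrite /s; lra. Qed.
Let s_gt : 2 - theta < s. Proof. by have := theta_gt1; rewrite /s; lra. Qed.
Let s_lt1 : s < 1. Proof. by have := theta_gt1; rewrite /s; lra. Qed.

Let b : R := 2^-1 `^ s^-1.

Let b_gt0 : 0 < b. Proof. exact: powR_gt0. Qed.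

Let b_pow_s : b `^ s = 2^-1.
Proof. by rewrite -powRrM mulVf ?powRr1 // gt_eqF. Qed.

Let b_lt_half : 2 * b < 1.
Proof.
have : b < 2^-1 `^ 1.
  apply: gtr_powR; first by rewrite invr_gt0 invf_lt1 //; lra.
  by rewrite invf_gt1.
by rewrite powRr1 ?invr_ge0 //; lra.
Qed.

#[local] HB.instance Definition _ :=
  isMeasurableFun.Build _ _ _ _ (cantor_fun b)
    (@measurable_cantor_fun _ b b_gt0 b_lt_half).

Local Notation cantor_measure := (line_measure (cantor_fun b)).

Let cantor_const : R := 8 * (2 / (1 - 2 * b)) `^ s.

Let cantor_const_ge0 : 0 <= cantor_const.
Proof. by rewrite mulr_ge0 ?powR_ge0. Qed.

Lemma cantor_measure_eball_le x r : 0 < r ->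
  (cantor_measure (eball x r) <= (cantor_const * r `^ s)%:E)%E.
Proof.
move=> r0; apply: (le_trans (line_measure_eball_le _ _ _)).
exact: lebesgue_cantor_fiber_le.
Qed.

Let E : set (R * R) := (cantor_set b `&` `[0, 1]) `*` [set 0].

Let measurable_E : measurable E.
Proof.
apply: measurableX; last exact: measurable_set1.
by apply: measurableI; [exact: measurable_cantor_set|exact: measurable_itv].
Qed.

Let E_segS : E `<=` @segS R.
Proof. by move=> y [[_]]; rewrite /= in_itv. Qed.

Let cantor_map_E t : E (line_map (cantor_fun b) t).
Proof.
split=> //; split; first exact: cantor_fun_in_cantor_set.
by rewrite /= in_itv; exact: cantor_fun01.
Qed.

Let segment_measure_E : segment_measure E = 0%E.
Proof.
apply/eqP; rewrite eq_le measure_ge0 andbT -(@lebesgue_cantor_set _ b b_gt0 b_lt_half).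
rewrite line_measureE; apply: le_measure; rewrite ?inE.
- exact: measurable_line_preimage _ _ measurable_E.
- exact: measurable_cantor_set.
- by move=> t [[[]]].
Qed.

Let cantor_measure_E : cantor_measure E = 1%E.
Proof.
rewrite -(line_measure_setT (cantor_fun b)) -[E]setTI.
by rewrite (line_measureI _ _ _ (fun t _ => cantor_map_E t)).
Qed.

Let weight (k : nat) : R := (2 ^+ k) `^ (theta - 1).

Let weight_gt0 k : 0 < weight k.
Proof. by rewrite powR_gt0 // exprn_gt0. Qed.

Let weight0 : weight 0 = 1.
Proof. by rewrite /weight expr0 powR1. Qed.

Definition mseq (k : nat) : {measure set (R * R) -> \bar R} :=
  measure_add (mscale (NngNum (ltW (weight_gt0 k))) segment_measure) cantor_measure.

Lemma mseqE k A :
  mseq k A = ((weight k)%:E * segment_measure A + cantor_measure A)%E.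
Proof. exact: measure_addE. Qed.

Let powR2B r : 0 < r -> r `^ (2 - theta) = r ^+ 2 / r `^ theta.
Proof. by move=> r0; rewrite powRB ?gt_eqF ?implybT // powR_mulrn // ltW. Qed.

Let mulr_powR2B (c : R) r : 0 < r -> c * r `^ (2 - theta) = c / r `^ theta * r ^+ 2.
Proof. by move=> r0; rewrite powR2B // mulrA mulrAC. Qed.

(* [weight k * r] compares with [r^(2 - theta)] as [2^k r] compares with 1. *)
Let weight_mulr k r : 0 < r ->
  weight k * r = (2 ^+ k * r) `^ (theta - 1) * r `^ (2 - theta).
Proof.
move=> r0; rewrite powRM ?exprn_ge0 ?(ltW r0) // -mulrA -powRD; last first.
  by rewrite (gt_eqF r0) implybT.
by rewrite (_ : theta - 1 + (2 - theta) = 1) ?powRr1 ?(ltW r0) //; ring.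
Qed.

Let weight_small k r : 0 < r -> r <= 2^-1 ^+ k -> weight k * r <= r `^ (2 - theta).
Proof.
move=> r0 rk; rewrite weight_mulr // ler_piMl ?powR_ge0 //.
have one_pow : 1 `^ (theta - 1) = 1 :> R by rewrite powR1.
rewrite -[leRHS]one_pow; apply: ge0_ler_powR; rewrite ?nnegrE ?mulr_ge0 ?exprn_ge0 ?(ltW r0) //.
  by rewrite subr_ge0 ltW.
by rewrite -ler_pdivlMl ?exprn_gt0 // -exprVn mulr1.
Qed.

Let weight_large k r : 0 < r -> 2^-1 ^+ k <= r -> r `^ (2 - theta) <= weight k * r.
Proof.
move=> r0 rk; rewrite weight_mulr // ler_peMl ?powR_ge0 //.
have one_pow : 1 `^ (theta - 1) = 1 :> R by rewrite powR1.
rewrite -[leLHS]one_pow; apply: ge0_ler_powR; rewrite ?nnegrE ?mulr_ge0 ?exprn_ge0 ?(ltW r0) //.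
  by rewrite subr_ge0 ltW.
by rewrite -ler_pdivrMl ?exprn_gt0 // -exprVn mulr1.
Qed.

Lemma mseq_ge_cantor k A : (cantor_measure A <= mseq k A)%E.
Proof. by rewrite mseqE leeDr // mule_ge0 // lee_fin ltW. Qed.

Lemma mseq_ge_segment k A : ((weight k)%:E * segment_measure A <= mseq k A)%E.
Proof. by rewrite mseqE leeDl. Qed.

Lemma mseq_le k A : measurable A -> (mseq k A <= (weight k + 1)%:E)%E.
Proof.
move=> mA; rewrite mseqE EFinD leeD ?line_measure_le1 //.
by rewrite -[leRHS]mule1 lee_wpmul2l ?lee_fin ?(ltW (weight_gt0 k)) ?line_measure_le1.
Qed.

Lemma is_measure2_mseq k : is_measure2 (mseq k).
Proof.
split.
  rewrite gt_eqF //; apply: (@lt_le_trans _ _ 1%E) => //.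
  by rewrite -(line_measure_setT (cantor_fun b)); exact: mseq_ge_cantor.
by move=> x; exists 1 => //; rewrite (le_lt_trans (mseq_le k _ (measurable_eball x 1))) ?ltry.
Qed.

Lemma msupp_mseq k : msupp (mseq k) = @segS R.
Proof.
apply/seteqP; split => x; last first.
  move=> Sx r r0; set r' := Num.min r 1.
  have r'0 : 0 < r' by rewrite lt_min r0 ltr01.
  have r'_le : r' <= r /\ r' <= 1 by split; rewrite ge_min lexx ?orbT.
  have sub : eball x r' `<=` eball x r.
    move=> y [h _]; split; last exact: ltW.
    by apply: (le_trans h); rewrite ler_sqr ?nnegrE ?(ltW r0) ?(ltW r'0) ?r'_le.1.
  apply: lt_le_trans (mseq_ge_segment k _); rewrite mule_gt0 ?lte_fin //.
  apply: (@lt_le_trans _ _ (segment_measure (eball x r'))).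
    by apply: (lt_le_trans _ (segment_measure_eball_ge _ _ Sx r'0 r'_le.2)); rewrite lte_fin.
  by apply: le_measure; rewrite ?inE //; exact: measurable_eball.
move=> Sx; apply: contrapT => nSx.
have [r r0 rS] := eball_disjoint_segS _ nSx.
have seg0 : segment_measure (eball x r) = 0%E.
  by apply: line_measure_eq0 => t t01; apply: rS.
have cantor0 : cantor_measure (eball x r) = 0%E.
  by apply: line_measure_eq0 => t _; apply: rS; exact: E_segS.
by have := Sx r r0; rewrite mseqE seg0 cantor0 mule0 adde0 ltxx.
Qed.

Lemma mseq_eball_le k x r : 0 < r -> r <= 2^-1 ^+ k ->
  (mseq k (eball x r) <= ((2 + cantor_const) / r `^ theta)%:E * leb2 (eball x r))%E.
Proof.
move=> r0 rk; have r1 : r <= 1.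
  by apply: le_trans rk _; rewrite exprn_ile1 // invf_le1 ?ler1n.
apply: (@le_trans _ _ ((weight k * (2 * r))%:E + (cantor_const * r `^ s)%:E)%E).
  rewrite mseqE EFinM leeD ?cantor_measure_eball_le //.
  by rewrite lee_wpmul2l ?lee_fin ?(ltW (weight_gt0 k)) ?segment_measure_eball_le ?ltW.
apply: (@le_trans _ _ ((2 + cantor_const) / r `^ theta * r ^+ 2)%:E); last first.
  rewrite EFinM lee_wpmul2l ?leb2_eball_ge ?(ltW r0) //.
  by rewrite lee_fin divr_ge0 ?powR_ge0 // addr_ge0.
rewrite -mulr_powR2B //.
have : r `^ s <= r `^ (2 - theta) by rewrite ger_powR ?r0 // ltW.
have := weight_small _ _ r0 rk; have := cantor_const_ge0.
rewrite -EFinD lee_fin; nra.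
Qed.

Lemma mseq_eball_ge k x r : segS x -> 2^-1 ^+ k <= r -> r <= 1 ->
  ((4^-1 / r `^ theta)%:E * leb2 (eball x r) <= mseq k (eball x r))%E.
Proof.
move=> Sx rk r1; have r0 : 0 < r by apply: lt_le_trans rk; rewrite exprn_gt0.
apply: le_trans (mseq_ge_segment k _).
apply: (@le_trans _ _ ((4^-1 / r `^ theta) * (4 * r ^+ 2))%:E).
  by rewrite [leRHS]EFinM lee_wpmul2l ?leb2_eball_le ?lee_fin ?divr_ge0 ?powR_ge0 ?(ltW r0).
have -> : 4^-1 / r `^ theta * (4 * r ^+ 2) = r `^ (2 - theta).
  by rewrite powR2B //; field; rewrite gt_eqF ?powR_gt0.
apply: (@le_trans _ _ (weight k * r)%:E); first by rewrite lee_fin weight_large.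
by rewrite EFinM lee_wpmul2l ?lee_fin ?(ltW (weight_gt0 k)) ?segment_measure_eball_ge.
Qed.

Let segment_measureI_E A : measurable A -> segment_measure (A `&` E) = 0%E.
Proof.
move=> mA; apply/eqP; rewrite eq_le measure_ge0 andbT -segment_measure_E.
by apply: le_measure; rewrite ?inE; [exact: measurableI|exact: measurable_E|move=> y []].
Qed.

Let segment_measureD_E A : measurable A -> segment_measure (A `\` E) = segment_measure A.
Proof.
move=> mA; rewrite [RHS](measureDI segment_measure mA measurable_E) /=.
by rewrite segment_measureI_E // adde0.
Qed.

Let cantor_measureI_E A : cantor_measure (A `&` E) = cantor_measure A.
Proof. exact: line_measureI. Qed.

Let cantor_measureD_E A : cantor_measure (A `\` E) = 0%E.
Proof. by apply: line_measure_eq0 => t _ []. Qed.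

Let density (k : nat) (y : R * R) : R := if y \in E then 1 else weight k.

Let measurable_density k : measurable_fun setT (density k).
Proof.
apply: measurable_fun_ifT; [|exact: measurable_cst..].
apply: (measurable_fun_bool true).
by rewrite setTI (_ : _ @^-1` _ = E) //; apply/seteqP; split => y /= h; [exact: set_mem h|exact: mem_set h].
Qed.

Lemma mseq_density k A : measurable A ->
  mseq k A = (\int[mseq 0]_(y in A) (density k y)%:E)%E.
Proof.
move=> mA; have mAE : measurable (A `&` E) by exact: measurableI.
have mAnE : measurable (A `\` E) by exact: measurableD.
rewrite -{2}(setUIDK A E) ge0_integral_setU //; last first.
- by rewrite disj_set2E; apply/eqP/seteqP; split => y // [[_ ?] [_ ?]].
- by move=> y _; rewrite lee_fin /density; case: ifP => // _; exact: ltW.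
- apply/measurable_realfun.measurable_EFinP; exact: measurable_funS (measurable_density k).
rewrite (@eq_integral _ _ _ _ _ (cst 1%E)); last first.
  by move=> y /[!inE] -[_ Ey]; rewrite /density mem_set.
rewrite (@eq_integral _ _ _ _ (A `\` E) (cst (weight k)%:E)); last first.
  by move=> y /[!inE] -[_ nEy]; rewrite /density memNset.
rewrite !integral_cst // mul1e !mseqE weight0 !mul1e.
rewrite segment_measureI_E // segment_measureD_E // cantor_measureI_E cantor_measureD_E.
by rewrite add0e adde0 addeC.
Qed.

Let weight_ratio k j : weight k / weight (k + j) = 2^-1 `^ (j%:R * (theta - 1)).
Proof.
rewrite /weight exprD powRM ?exprn_ge0 // invfM mulrA mulfV ?mul1r; last first.
  by rewrite gt_eqF ?powR_gt0 ?exprn_gt0.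
by rewrite -powR_invl ?exprn_gt0 // -exprVn -powR_mulrn ?invr_ge0 // -powRrM.
Qed.

Lemma density_ratio k j x :
  2^-1 `^ (theta * j%:R) / 1 <= density k x / density (k + j) x <= 1.
Proof.
have half01 : 0 < (2^-1 : R) <= 1 by apply/andP; split; lra.
have theta_j : (0 : R) <= theta * j%:R by rewrite mulr_ge0 // ltW // (lt_trans ltr01).
rewrite divr1 /density; case: ifP => _.
  by rewrite divr1 lexx andbT -[leRHS](powRr0 2^-1) ger_powR.
rewrite weight_ratio -[X in _ <= _ <= X](powRr0 2^-1) !ger_powR //.
- by rewrite mulr_ge0 // subr_ge0 ltW.
- by rewrite mulrC ler_wpM2r // gerBl.
Qed.

Lemma condM_mseq : condM theta (2^-1) (@segS R) mseq.
Proof.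
split; first exact: msupp_mseq.
split; first by exists (2 + cantor_const) => [|k x r r0 rk]; [rewrite ltr_wpDr|exact: mseq_eball_le].
split; first by exists 4^-1 => // k x r Sx rk r1; exact: mseq_eball_ge.
exists density; split; first exact: measurable_density.
split.
  move=> k; exists (1 + weight k); apply: aeW => x; rewrite /density.
  by have := weight_gt0 k; case: ifP => _ w0; rewrite ger0_norm; lra.
split; first exact: mseq_density.
by exists 1 => // k j; apply: aeW => x _; exact: density_ratio.
Qed.

Let gap : R := s - (2 - theta).

Lemma mseq_cantor_ratio_le k x r (C2 : R) : 0 < r -> 0 < C2 ->
  ((C2 / r `^ theta)%:E * leb2 (eball x r) <= mseq k (eball x r))%E ->
  0 <= fine (mseq k (eball x r `&` E)) / fine (mseq k (eball x r))
    <= cantor_const / C2 * r `^ gap.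
Proof.
move=> r0 C20 den_M3; have mB := measurable_eball x r.
have den_ge : ((C2 * r `^ (2 - theta))%:E <= mseq k (eball x r))%E.
  apply: le_trans den_M3; rewrite mulr_powR2B // EFinM lee_wpmul2l ?leb2_eball_ge ?(ltW r0) //.
  by rewrite lee_fin divr_ge0 ?powR_ge0 ?ltW.
have num_le : (mseq k (eball x r `&` E) <= (cantor_const * r `^ s)%:E)%E.
  rewrite mseqE segment_measureI_E // mule0 add0e cantor_measureI_E.
  exact: cantor_measure_eball_le.
have num_fin : mseq k (eball x r `&` E) \is a fin_num.
  by rewrite ge0_fin_numE ?measure_ge0 // (le_lt_trans num_le) ?ltry.
have den_fin : mseq k (eball x r) \is a fin_num.
  by rewrite ge0_fin_numE ?measure_ge0 // (le_lt_trans (mseq_le k _ mB)) ?ltry.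
have lower0 : 0 < C2 * r `^ (2 - theta) by rewrite mulr_gt0 ?powR_gt0.
set N := fine (mseq k (eball x r `&` E)); set D := fine (mseq k (eball x r)).
have N_le : N <= cantor_const * r `^ s by rewrite -lee_fin fineK.
have D_ge : C2 * r `^ (2 - theta) <= D by rewrite -lee_fin fineK.
have N0 : 0 <= N by rewrite fine_ge0 ?measure_ge0.
have D0 : 0 < D by apply: lt_le_trans D_ge.
rewrite divr_ge0 ?(ltW D0) //= ler_pdivrMr //.
have e : cantor_const * r `^ s = cantor_const / C2 * r `^ gap * (C2 * r `^ (2 - theta)).
  by rewrite /gap powRB ?gt_eqF ?implybT //; field; rewrite !gt_eqF ?powR_gt0.
have : 0 <= cantor_const / C2 * r `^ gap by rewrite mulr_ge0 ?powR_ge0 // divr_ge0 // ltW.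
nra.
Qed.

(* Whatever the scale [eps], (M3) keeps [mseq k] of order [r^(2 - theta)] on
   balls of radius [r = eps^k] centred on [E], while the part on [E] is only
   [O(r^s)] with [s > 2 - theta]. *)
Lemma mseq_cantor_density_cvg0 eps (C2 : R) x : 0 < eps < 1 -> 0 < C2 ->
  (forall k (y : R * R) r, segS y -> eps ^+ k <= r -> r <= 1 ->
     ((C2 / r `^ theta)%:E * leb2 (eball y r) <= mseq k (eball y r))%E) ->
  E x ->
  limn_esup (fun k => (fine (mseq k (eball x (eps ^+ k) `&` E))
                       / fine (mseq k (eball x (eps ^+ k))))%:E) = 0%E.
Proof.
move=> /andP[eps0 eps1] C20 M3 Ex.
pose u k := fine (mseq k (eball x (eps ^+ k) `&` E)) / fine (mseq k (eball x (eps ^+ k))).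
pose q := eps `^ gap.
have q01 : 0 <= q < 1.
  rewrite powR_ge0 /= -(powRr0 eps) gtr_powR ?eps0 ?eps1 //.
  by rewrite /gap; have := s_gt; lra.
have u_bound k : 0 <= u k <= cantor_const / C2 * q ^+ k.
  have r0 : 0 < eps ^+ k by rewrite exprn_gt0.
  have r1 : eps ^+ k <= 1 by rewrite exprn_ile1 ?ltW.
  have -> : q ^+ k = (eps ^+ k) `^ gap.
    by rewrite -!powR_mulrn ?powR_ge0 ?(ltW eps0) // powRAC.
  apply: mseq_cantor_ratio_le r0 C20 _.
  exact: M3 (E_segS _ Ex) (lexx _) r1.
have u0 : u @ \oo --> (0 : R).
  apply: (@squeeze_cvgr _ _ _ _ (cst 0) (fun k => cantor_const / C2 * q ^+ k)).
  - by apply: nearW => k; exact: u_bound.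
  - exact: cvg_cst.
  rewrite -(mulr0 (cantor_const / C2)); apply: cvgM; first exact: cvg_cst.
  by apply: cvg_expr; rewrite ger0_norm; case/andP: q01.
have uE0 : (u k)%:E @[k --> \oo] --> (0 : \bar R).
  by apply: cvg_EFin => //; apply: nearW.
exact: (cvg_limn_einf_sup uE0).2.
Qed.

Lemma not_inMstr_mseq : ~ inMstr theta (@segS R) mseq.
Proof.
move=> [_ [eps [eps01 [[_ [_ [[C2 C20 M3] _]]] M5]]]].
have [N [mN N0 EN]] := M5 E measurable_E E_segS.
have EN' : E `<=` N.
  move=> x Ex; apply: EN => /(_ Ex).
  by rewrite (mseq_cantor_density_cvg0 _ _ _ eps01 C20 M3 Ex) ltxx.
have : (mseq 0 E <= mseq 0 N)%E by apply: le_measure; rewrite ?inE.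
rewrite N0; apply/negP; rewrite -ltNge.
by apply: lt_le_trans (mseq_ge_cantor 0 E); rewrite cantor_measure_E.
Qed.

End counterexample.

Theorem mainTheorem10 (R : realType) (theta : R) :
  1 < theta < 2 ->
  exists m : nat -> {measure set (R * R) -> \bar R},
    inM theta (@segS R) m /\ ~ inMstr theta (@segS R) m.
Proof.
move=> /andP[theta_gt1 theta_lt2]; exists (mseq _ theta_gt1 theta_lt2).
split; last exact: not_inMstr_mseq.
split; first exact: is_measure2_mseq.
by exists 2^-1; split; [apply/andP; split; lra|exact: condM_mseq].
Qed.
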